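(* Let $\rho$ be a density operator on a $D$-dimensional Hilbert space with eigenvalues $\lambda_1,\dots,\lambda_D$ (with multiplicity), and let $0<\epsilon<1$. Let $x$ be the unique number $\ge\min_i\lambda_i$ with $\sum_i(x-\lambda_i)^+=\epsilon$ and $y$ the unique number with $\sum_i(\lambda_i-y)^+=\epsilon$, where $t^+=\max(t,0)$, and assume $x\le y$. Set $\mu_i=\min(\max(\lambda_i,x),y)$, i.e. eigenvalues below $x$ are raised to $x$, those above $y$ are lowered to $y$, and the others are unchanged. Then $$\inf_{\sigma\in\mathcal B^\epsilon(\rho)}\mathrm{tr}\,\sigma^2=\sum_{i=1}^D\mu_i^2,\qquad\text{so}\qquad S_2^\epsilon(\rho)=-\log_2\sum_{i=1}^D\mu_i^2 .$$ (In the paper this is applied to $\rho_{\vec XE}$, with $D=d^{3n}$ and the spectrum consisting of $0$ with multiplicity $d^{3n}-d^{2n}$ and $(\beta_0/d)^l(\beta_1/d)^{n-l}$ with multiplicity $d^n\binom nl(d-1)^{n-l}$, $0\le l\le n$.)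
   Context: Trace distance $\|\rho-\sigma\|=\frac12\mathrm{tr}|\rho-\sigma|$; $\mathcal B^\epsilon(\rho)$ is the set of density operators $\sigma$ on the same space with $\|\rho-\sigma\|\le\epsilon$. The $\epsilon$-smooth Rényi entropy of order $2$ is $S_2^\epsilon(\rho)=-\log_2\inf_{\sigma\in\mathcal B^\epsilon(\rho)}\mathrm{tr}\,\sigma^2$. *)

From HB Require Import structures.
From mathcomp Require Import all_boot all_order all_algebra.
From mathcomp Require Import sesquilinear spectral.
From mathcomp Require Import complex.
From mathcomp Require Import classical_sets reals exp.

Set Implicit Arguments.
Unset Strict Implicit.
Unset Printing Implicit Defensive.

Import Order.TTheory GRing.Theory Num.Theory.
Local Open Scope ring_scope.
Local Open Scope sesquilinear_scope.
Local Open Scope classical_set_scope.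

(* Positive semidefinite: <v| A |v> >= 0 for every vector (row-vector
   convention: v A v^dagger), where 0 <= z in C means z is a nonnegative real. *)
Definition psdmx {K : numClosedFieldType} n (A : 'M[K]_n) : Prop :=
  forall v : 'rV[K]_n, 0 <= (v *m A *m v ^t*) 0 0.

Definition density {K : numClosedFieldType} n (A : 'M[K]_n) : Prop :=
  [/\ A ^t* = A, psdmx A & \tr A = 1].

(* tr |A| with |A| = sqrt(A^* A): the sum of the square roots of the
   eigenvalues (with multiplicity) of the PSD matrix A^* A. *)
Definition trnorm {K : numClosedFieldType} n (A : 'M[K]_n) : K :=
  \sum_(i < n) sqrtC (spectral_diag (A ^t* *m A) 0 i).

Definition tdist {K : numClosedFieldType} n (rho sigma : 'M[K]_n) : K :=
  trnorm (rho - sigma) / 2%:R.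

Definition eps_ball {R : rcfType} n (eps : R) (rho : 'M[R[i]]_n)
  : set 'M[R[i]]_n :=
  [set sigma | density sigma /\ tdist rho sigma <= (eps%:C)%C].

(* The set { tr sigma^2 : sigma in B^eps(rho) } (tr sigma^2 is real for a
   Hermitian sigma; we take its real part to land in R). *)
Definition tr2_set {R : rcfType} n (eps : R) (rho : 'M[R[i]]_n) : set R :=
  [set complex.Re (\tr (sigma *m sigma)) | sigma in eps_ball eps rho].

Definition log2 {R : realType} (t : R) : R := ln t / ln 2.

Definition S2eps {R : realType} n (eps : R) (rho : 'M[R[i]]_n) : R :=
  - log2 (inf (tr2_set eps rho)).

From HB Require Import structures.
From mathcomp Require Import all_boot all_order all_algebra.
From mathcomp Require Import sesquilinear spectral.
From mathcomp Require Import complex.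
From mathcomp Require Import classical_sets reals exp.
From mathcomp Require Import ring lra.

(* Diagonalise [rho = P^* diag(lam) P] and let [mu = P^* diag(clamp lam) P].
   Clamping raises total mass [eps] up to [x] and removes [eps] above [y], so
   [mu] is a density operator at trace distance exactly [eps] from [rho], and
   [tr mu^2] is the sum of the clamped squares.  Conversely, for [sigma] in the
   ball, [tr sigma^2 >= 2 tr(sigma mu) - tr mu^2], where
   [tr(sigma mu) = tr(rho mu) - tr((rho - sigma) mu)] and
   [tr(rho mu) = tr mu^2 + (y - x) eps].  As [rho - sigma] is traceless,
   [mu] may be shifted by [(x + y)/2] in the last trace; the shifted spectrum
   lies in [[-(y - x)/2, (y - x)/2]] and [tr|rho - sigma| <= 2 eps], so
   [tr((rho - sigma) mu) <= (y - x) eps] and hence [tr sigma^2 >= tr mu^2]. *)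

Set Implicit Arguments.
Unset Strict Implicit.
Unset Printing Implicit Defensive.

Import Order.TTheory GRing.Theory Num.Theory.
Local Open Scope ring_scope.
Local Open Scope sesquilinear_scope.

Lemma char_poly_conj (R : comUnitRingType) n (U P A : 'M[R]_n) :
  U *m P = 1%:M -> char_poly (U *m A *m P) = char_poly A.
Proof.
move=> UP; rewrite /char_poly /char_poly_mx.
have XE : ('X%:M : 'M[{poly R}]_n) = map_mx polyC U *m 'X%:M *m map_mx polyC P.
  by rewrite mul_mx_scalar -scalemxAl -map_mxM UP map_mx1 scalemx1.
rewrite {1}XE !map_mxM -mulmxBl -mulmxBr !det_mulmx mulrC mulrA -det_mulmx.
by rewrite -map_mxM (mulmx1C UP) map_mx1 det1 mul1r.
Qed.

Section UnitaryConjugation.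
Variable C : numClosedFieldType.

Definition uconj n (P A : 'M[C]_n) := P^t* *m A *m P.

Lemma uconjM n (P A B : 'M[C]_n) : P \is unitarymx ->
  uconj P A *m uconj P B = uconj P (A *m B).
Proof. by move=> UP; rewrite /uconj !mulmxA mulmxtVK. Qed.

Lemma uconjB n (P A B : 'M[C]_n) : uconj P A - uconj P B = uconj P (A - B).
Proof. by rewrite /uconj mulmxBr mulmxBl. Qed.

Lemma uconj_scalar n (P : 'M[C]_n) a : P \is unitarymx -> uconj P a%:M = a%:M.
Proof.
move=> /unitarymxP UP.
by rewrite /uconj mul_mx_scalar -scalemxAl (mulmx1C UP) scalemx1.
Qed.

Lemma uconj_adj n (P A : 'M[C]_n) : (uconj P A)^t* = uconj P (A^t*).
Proof. by rewrite /uconj !trmx_mul !map_mxM trmxCK mulmxA. Qed.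

Lemma mxtrace_uconj n (P A : 'M[C]_n) : P \is unitarymx -> \tr (uconj P A) = \tr A.
Proof. by move=> UP; rewrite mxtrace_mulC mulmxA (unitarymxP UP) mul1mx. Qed.

Lemma char_poly_uconj_diag n (P : 'M[C]_n) d : P \is unitarymx ->
  char_poly (uconj P (diag_mx d)) = \prod_(i < n) ('X - (d 0 i)%:P).
Proof.
move=> /unitarymxP UP; rewrite char_poly_conj ?(mulmx1C UP) // char_poly_trig //.
by apply: eq_bigr => i _; rewrite mxE eqxx mulr1n.
Qed.

Lemma hermitian_spectral n (A : 'M[C]_n) : A^t* = A ->
  A = uconj (spectralmx A) (diag_mx (spectral_diag A)).
Proof.
move=> hA; have /orthomx_spectralP {1}-> : A \is normalmx by apply/normalmxP; rewrite hA.
by rewrite invmx_unitary ?spectral_unitarymx.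
Qed.

Lemma char_poly_hermitian n (A : 'M[C]_n) : A^t* = A ->
  char_poly A = \prod_(i < n) ('X - (spectral_diag A 0 i)%:P).
Proof.
by move=> hA; rewrite {1}(hermitian_spectral hA) char_poly_uconj_diag ?spectral_unitarymx.
Qed.

Lemma prod_XsubC_eq_sum n (a b : 'I_n -> C) :
  \prod_(i < n) ('X - (a i)%:P) = \prod_(i < n) ('X - (b i)%:P) ->
  forall (V : nmodType) (f : C -> V), \sum_(i < n) f (a i) = \sum_(i < n) f (b i).
Proof.
move=> ab V f.
have ab_perm : perm_eq [seq a i | i <- enum 'I_n] [seq b i | i <- enum 'I_n].
  by apply: prod_XsubC_eq; rewrite !big_map.
by have := perm_big (x := 0) (op := +%R) _ ab_perm (P := xpredT) (F := f); rewrite !big_map.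
Qed.

Lemma trnorm_uconj_diag n (P : 'M[C]_n) d : P \is unitarymx ->
  trnorm (uconj P (diag_mx d)) = \sum_(i < n) `|d 0 i|.
Proof.
move=> UP; set A := uconj P _.
have hAA : (A^t* *m A)^t* = A^t* *m A by rewrite trmx_mul map_mxM trmxCK.
have AA : A^t* *m A = uconj P (diag_mx (\row_i ((d 0 i)^* * d 0 i))).
  rewrite /A uconj_adj uconjM // tr_diag_mx map_diag_mx mulmx_diag.
  by congr (uconj _ (diag_mx _)); apply/rowP => i; rewrite !mxE.
have := char_poly_hermitian hAA; rewrite {1}AA char_poly_uconj_diag // => spAA.
rewrite /trnorm -(prod_XsubC_eq_sum spAA sqrtC).
by apply: eq_bigr => i _; rewrite mxE normC_def mulrC.
Qed.

Lemma norm_mxtrace_uconj_diagM_le n (Q P : 'M[C]_n) (dl ka : 'rV[C]_n) c :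
  Q \is unitarymx -> P \is unitarymx -> (forall k, `|ka 0 k| <= c) ->
  `|\tr (uconj Q (diag_mx dl) *m uconj P (diag_mx ka))|
    <= c * \sum_(j < n) `|dl 0 j|.
Proof.
move=> UQ UP kac; set W := Q *m P^t*.
have UW : W \is unitarymx by rewrite mul_unitarymx // trmxC_unitary.
have trE : \tr (uconj Q (diag_mx dl) *m uconj P (diag_mx ka))
    = \tr (diag_mx dl *m (W *m diag_mx ka *m W^t*)).
  by rewrite /uconj /W trmx_mul map_mxM trmxCK -!mulmxA mxtrace_mulC !mulmxA.
have Wrow j : \sum_(k < n) W j k * (W j k)^* = 1.
  have /matrixP/(_ j j) := unitarymxP UW; rewrite !mxE eqxx /= => WW.
  by rewrite -[RHS]WW; apply: eq_bigr => k _; rewrite !mxE.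
rewrite trE /mxtrace mul_diag_mx; clearbody W.
under eq_bigr do rewrite mxE.
rewrite mulr_sumr; apply: le_trans (ler_norm_sum _ _ _) _.
apply: ler_sum => j _; rewrite normrM mulrC ler_wpM2r //.
rewrite mul_mx_diag mxE; under eq_bigr do rewrite !mxE.
apply: le_trans (ler_norm_sum _ _ _) _.
rewrite -[c]mulr1 -(Wrow j) mulr_sumr; apply: ler_sum => k _.
rewrite !normrM norm_conjC mulrAC -expr2 normCK mulrC.
by rewrite ler_wpM2r // mul_conjC_ge0.
Qed.

Lemma norm_mxtrace_traceless_le n (Dl P : 'M[C]_n) (c : 'rV[C]_n) h e :
  Dl^t* = Dl -> \tr Dl = 0 -> P \is unitarymx -> (forall k, `|c 0 k - h| <= e) ->
  `|\tr (Dl *m uconj P (diag_mx c))| <= e * trnorm Dl.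
Proof.
move=> hD trD UP ce.
have -> : uconj P (diag_mx c) = uconj P (diag_mx (c - const_mx h)) + h%:M.
  by rewrite raddfB /= diag_const_mx -uconjB uconj_scalar // subrK.
rewrite mulmxDr linearD /= mul_mx_scalar mxtraceZ trD mulr0 addr0.
rewrite (hermitian_spectral hD) trnorm_uconj_diag ?spectral_unitarymx //.
apply: norm_mxtrace_uconj_diagM_le => // [|k]; first exact: spectral_unitarymx.
by rewrite !mxE; exact: ce.
Qed.

Lemma psdmx_uconj_diag n (P : 'M[C]_n) (d : 'rV[C]_n) : P \is unitarymx ->
  psdmx (uconj P (diag_mx d)) <-> forall i, 0 <= d 0 i.
Proof.
move=> UP; split=> [psd i|d_ge0 v].
  have := psd ('e_i *m P).
  rewrite /uconj trmx_mul map_mxM !mulmxA !mulmxtVK // mul_mx_diag mxE.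
  rewrite (bigD1 i) //= big1 ?addr0 => [|k ki]; last first.
    by rewrite !mxE (negPf ki) andbF /= !mul0r.
  by rewrite !mxE !eqxx /= mul1r conjC1 mulr1.
have -> : v *m uconj P (diag_mx d) *m v^t*
    = (v *m P^t*) *m diag_mx d *m (v *m P^t*)^t*.
  by rewrite /uconj trmx_mul map_mxM trmxCK !mulmxA.
rewrite mul_mx_diag !mxE; apply: sumr_ge0 => k _; rewrite !mxE.
by rewrite mulrAC mulr_ge0 // mul_conjC_ge0.
Qed.

Lemma mxtrace_mul_hermitian_real n (A B : 'M[C]_n) :
  A^t* = A -> B^t* = B -> \tr (A *m B) \is Num.real.
Proof.
move=> hA hB; rewrite CrealE; apply/eqP.
have <- : \tr ((A *m B)^t*) = (\tr (A *m B))^*.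
  by rewrite /mxtrace rmorph_sum; apply: eq_bigr => i _; rewrite !mxE.
by rewrite trmx_mul map_mxM hA hB mxtrace_mulC.
Qed.

Lemma mxtrace_sqr_tangent n (A B : 'M[C]_n) : A^t* = A -> B^t* = B ->
  2%:R * \tr (A *m B) - \tr (B *m B) <= \tr (A *m A).
Proof.
move=> hA hB; set E := A - B.
have hE : E^t* = E by rewrite linearB /= map_mxB hA hB.
rewrite -subr_ge0 (_ : _ - _ = \tr (E *m E)); last first.
  by rewrite /E mulmxBl !mulmxBr !linearB /= [\tr (B *m A)]mxtrace_mulC; ring.
apply: sumr_ge0 => i _; rewrite mxE; apply: sumr_ge0 => j _.
have -> : E j i = (E i j)^* by rewrite -{1}hE !mxE.
exact: mul_conjC_ge0.
Qed.

End UnitaryConjugation.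

Section Clamp.
Variable R : realFieldType.

Definition clamp (x y r : R) := Num.min (Num.max r x) y.

Lemma clampP x y r : x <= y ->
  [\/ [/\ r <= x, clamp x y r = x, Num.max (x - r) 0 = x - r & Num.max (r - y) 0 = 0],
      [/\ x <= r <= y, clamp x y r = r, Num.max (x - r) 0 = 0 & Num.max (r - y) 0 = 0]
    | [/\ y <= r, clamp x y r = y, Num.max (x - r) 0 = 0 & Num.max (r - y) 0 = r - y]].
Proof.
move=> xy; rewrite /clamp !maxEle !minEle.
case: (lerP r x) => rx; [apply: Or31 | case: (lerP r y) => ry; [apply: Or32 | apply: Or33]];
  split; repeat case: ifP; move=> *; lra.
Qed.

Lemma clamp_ge x y r : x <= y -> x <= clamp x y r.
Proof. by move=> xy; case: (clampP r xy) => [[_ -> _ _]|[/andP[? _] -> _ _]|[_ -> _ _]]. Qed.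

Lemma clamp_le x y r : x <= y -> clamp x y r <= y.
Proof. by move=> xy; case: (clampP r xy) => [[_ -> _ _]|[/andP[_ ?] -> _ _]|[_ -> _ _]]. Qed.

Lemma clampE x y r : x <= y ->
  clamp x y r = r + Num.max (x - r) 0 - Num.max (r - y) 0.
Proof. by move=> xy; case: (clampP r xy) => [] [_ -> -> ->]; ring. Qed.

Lemma dist_clamp x y r : x <= y ->
  `|r - clamp x y r| = Num.max (x - r) 0 + Num.max (r - y) 0.
Proof.
move=> xy; case: (clampP r xy) => [] [r_cmp -> -> ->].
- by rewrite addr0 distrC ger0_norm // subr_ge0.
- by rewrite subrr normr0 addr0.
- by rewrite add0r ger0_norm // subr_ge0.
Qed.

Lemma mul_clamp x y r : x <= y ->
  r * clamp x y r = clamp x y r ^+ 2 - x * Num.max (x - r) 0 + y * Num.max (r - y) 0.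
Proof. by move=> xy; case: (clampP r xy) => [] [_ -> -> ->]; ring. Qed.

End Clamp.

Section ClampSums.
Variables (R : realFieldType) (n : nat) (r : 'I_n -> R) (x y eps : R).
Hypotheses (xy : x <= y) (below : \sum_i Num.max (x - r i) 0 = eps)
  (above : \sum_i Num.max (r i - y) 0 = eps).

Lemma sum_clamp : \sum_i clamp x y (r i) = \sum_i r i.
Proof.
under eq_bigr do rewrite clampE //.
by rewrite big_split big_split /= sumrN below above addrK.
Qed.

Lemma sum_mul_clamp :
  \sum_i r i * clamp x y (r i) = \sum_i clamp x y (r i) ^+ 2 + (y - x) * eps.
Proof.
under eq_bigr do rewrite mul_clamp //.
by rewrite big_split big_split /= sumrN -!mulr_sumr below above; ring.
Qed.

Lemma sum_dist_clamp : \sum_i `|r i - clamp x y (r i)| = 2 * eps.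
Proof. by under eq_bigr do rewrite dist_clamp //; rewrite big_split /= below above; ring. Qed.

Lemma lower_level_ge0 : (forall i, 0 <= r i) -> 0 < eps -> 0 <= x.
Proof.
move=> r_ge0 eps_gt0; rewrite leNgt; apply/negP => x_lt0.
suff : eps = 0 by move=> eps0; rewrite eps0 ltxx in eps_gt0.
rewrite -below big1 // => i _; rewrite maxEle ifT //; have := r_ge0 i; lra.
Qed.

End ClampSums.

Section RealSpectrum.
Variable R : rcfType.
Local Notation C := R[i].
Local Notation cdiag f := (diag_mx (\row_i ((f i)%:C)%C)).

Lemma normc_real (t : R) : `|(t%:C)%C| = ((`|t|)%:C)%C :> C.
Proof. by rewrite normc_def /= expr0n /= addr0 sqrtr_sqr. Qed.

Lemma uconj_cdiag_adj n (P : 'M[C]_n) (f : 'I_n -> R) :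
  (uconj P (cdiag f))^t* = uconj P (cdiag f).
Proof.
rewrite uconj_adj tr_diag_mx map_diag_mx; congr (uconj _ (diag_mx _)).
by apply/rowP => i; rewrite !mxE; apply: conj_Creal; apply/complex_realP; exists (f i).
Qed.

Lemma mxtrace_uconj_cdiag n (P : 'M[C]_n) (f : 'I_n -> R) : P \is unitarymx ->
  \tr (uconj P (cdiag f)) = ((\sum_i f i)%:C)%C.
Proof.
move=> UP; rewrite mxtrace_uconj // mxtrace_diag rmorph_sum.
by apply: eq_bigr => i _; rewrite mxE.
Qed.

Lemma mxtrace_uconj_cdiagM n (P : 'M[C]_n) (f g : 'I_n -> R) : P \is unitarymx ->
  \tr (uconj P (cdiag f) *m uconj P (cdiag g)) = ((\sum_i f i * g i)%:C)%C.
Proof.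
move=> UP; rewrite uconjM // mulmx_diag mxtrace_uconj // mxtrace_diag rmorph_sum.
by apply: eq_bigr => i _; rewrite !mxE rmorphM.
Qed.

Lemma density_uconj_cdiag n (P : 'M[C]_n) (f : 'I_n -> R) : P \is unitarymx ->
  density (uconj P (cdiag f)) <-> (forall i, 0 <= f i) /\ \sum_i f i = 1.
Proof.
move=> UP; rewrite /density mxtrace_uconj_cdiag //; split.
  move=> [_ /(psdmx_uconj_diag _ UP) f_ge0 /(congr1 (@complex.Re R)) /= f_sum].
  by split=> // i; have := f_ge0 i; rewrite mxE ler0c.
move=> [f_ge0 ->]; split=> //; first exact: uconj_cdiag_adj.
by apply/(psdmx_uconj_diag _ UP) => i; rewrite mxE ler0c.
Qed.

Lemma tdist_uconj_cdiag n (P : 'M[C]_n) (f g : 'I_n -> R) : P \is unitarymx ->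
  tdist (uconj P (cdiag f)) (uconj P (cdiag g))
    = ((\sum_i `|f i - g i|)%:C)%C / 2%:R.
Proof.
move=> UP; rewrite /tdist uconjB -linearB /= trnorm_uconj_diag // rmorph_sum.
by congr (_ / _); apply: eq_bigr => i _; rewrite !mxE -rmorphB normc_real.
Qed.

Lemma density_spectral n (rho : 'M[C]_n) (lam : 'I_n -> R) :
  density rho -> char_poly rho = \prod_(i < n) ('X - ((lam i)%:C)%C%:P) ->
  exists2 P, P \is unitarymx &
  exists2 r : 'I_n -> R, rho = uconj P (cdiag r) &
    forall (V : nmodType) (g : R -> V), \sum_i g (r i) = \sum_i g (lam i).
Proof.
move=> [h_rho _ _] chr; exists (spectralmx rho); first exact: spectral_unitarymx.
have rho_herm : rho \is hermsymmx by apply/is_hermitianmxP; rewrite expr0 scale1r h_rho.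
have /mxOverP sp_real := hermitian_spectral_diag_real rho_herm.
exists (fun i => complex.Re (spectral_diag rho 0 i)).
  rewrite {1}(hermitian_spectral h_rho); congr (uconj _ (diag_mx _)).
  by apply/rowP => i; rewrite mxE RRe_real.
move=> V g; have := char_poly_hermitian h_rho; rewrite chr => /esym sp_lam.
exact: prod_XsubC_eq_sum sp_lam V (fun z => g (complex.Re z)).
Qed.

Section ClampedSpectrum.
Variables (n : nat) (P : 'M[C]_n) (r : 'I_n -> R) (x y eps : R).
Hypotheses (UP : P \is unitarymx) (xy : x <= y)
  (below : \sum_i Num.max (x - r i) 0 = eps)
  (above : \sum_i Num.max (r i - y) 0 = eps).

Let rho := uconj P (cdiag r).
Let mu := uconj P (cdiag (fun i => clamp x y (r i))).

Lemma clamp_in_eps_ball : density rho -> 0 < eps -> eps_ball eps rho mu.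
Proof.
move=> /(density_uconj_cdiag _ UP) [r_ge0 r_sum] eps_gt0.
have x_ge0 := lower_level_ge0 below r_ge0 eps_gt0.
split; first apply/(density_uconj_cdiag _ UP); first split.
- by move=> i; apply: le_trans x_ge0 (clamp_ge _ xy).
- by rewrite (sum_clamp xy below above).
rewrite tdist_uconj_cdiag // (sum_dist_clamp xy below above) rmorphM rmorph_nat.
by rewrite mulrC mulKf ?pnatr_eq0.
Qed.

Lemma clamp_sqr_le_mxtrace sigma : density rho -> density sigma ->
  tdist rho sigma <= (eps%:C)%C ->
  \sum_i clamp x y (r i) ^+ 2 <= complex.Re (\tr (sigma *m sigma)).
Proof.
move=> [_ _ tr_rho] [h_sigma _ tr_sigma] close.
set Dl := rho - sigma.
have h_mu : mu^t* = mu := uconj_cdiag_adj P _.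
have h_Dl : Dl^t* = Dl by rewrite linearB /= map_mxB h_sigma uconj_cdiag_adj.
have tr_Dl : \tr Dl = 0 by rewrite linearB /= tr_rho tr_sigma subrr.
have trnorm_Dl : trnorm Dl <= ((2 * eps)%:C)%C.
  by move: close; rewrite /tdist ler_pdivrMr ?ltr0n // rmorphM rmorph_nat mulrC.
have mu_spec k : `|(\row_i ((clamp x y (r i))%:C)%C) 0 k - (((x + y) / 2)%:C)%C|
    <= (((y - x) / 2)%:C)%C.
  rewrite mxE -rmorphB normc_real lecR ler_norml.
  by have := clamp_ge (r k) xy; have := clamp_le (r k) xy; lra.
have Dl_mu : \tr (Dl *m mu) <= (((y - x) * eps)%:C)%C.
  apply: le_trans (real_ler_norm (mxtrace_mul_hermitian_real h_Dl h_mu)) _.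
  apply: le_trans (norm_mxtrace_traceless_le h_Dl tr_Dl UP mu_spec) _.
  apply: le_trans (ler_wpM2l _ trnorm_Dl) _; first by rewrite ler0c divr_ge0 ?subr_ge0.
  by rewrite -rmorphM lecR; lra.
have := mxtrace_sqr_tangent h_sigma h_mu.
have -> : \tr (sigma *m mu) = \tr (rho *m mu) - \tr (Dl *m mu).
  by rewrite /Dl mulmxBl linearB /= opprB addrC subrK.
rewrite !mxtrace_uconj_cdiagM // (sum_mul_clamp xy below above) => tangent.
rewrite -lecR RRe_real ?mxtrace_mul_hermitian_real //; apply: le_trans tangent.
under [\sum_i _ * _]eq_bigr do rewrite -expr2.
rewrite rmorphD /=; move: Dl_mu.
move: (\tr (Dl *m mu)) (((y - x) * eps)%:C)%C ((\sum_i clamp x y (r i) ^+ 2)%:C)%C.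
move=> t e s te; rewrite -subr_ge0 (_ : _ - s = 2%:R * (e - t)); last by ring.
by rewrite mulr_ge0 ?ler0n ?subr_ge0.
Qed.

End ClampedSpectrum.

End RealSpectrum.

Lemma inf_attained (R : realType) (E : set R) m : E m -> lbound E m -> inf E = m.
Proof.
move=> Em m_lb; apply/le_anti/andP; split; first by apply: ge_inf => //; exists m.
by apply: lb_le_inf => //; exists m.
Qed.

Theorem mainTheorem3 (R : realType) (D : nat) (rho : 'M[R[i]]_D)
    (lam : 'I_D -> R) (eps x y : R) :
  density rho ->
  char_poly rho = \prod_(i < D) ('X - ((lam i)%:C)%C%:P) ->
  0 < eps < 1 ->
  (exists i, lam i <= x) ->
  \sum_(i < D) Num.max (x - lam i) 0 = eps ->
  \sum_(i < D) Num.max (lam i - y) 0 = eps ->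
  x <= y ->
  inf (tr2_set eps rho)
    = \sum_(i < D) (Num.min (Num.max (lam i) x) y) ^+ 2 /\
  S2eps eps rho
    = - log2 (\sum_(i < D) (Num.min (Num.max (lam i) x) y) ^+ 2).
Proof.
(* [exists i, lam i <= x] already follows from [0 < eps]. *)
move=> rho_dens chr /andP[eps_gt0 _] _ below above xy.
have [P UP [r rhoE sum_r]] := density_spectral rho_dens chr.
have below_r : \sum_i Num.max (x - r i) 0 = eps.
  by rewrite (sum_r _ (fun t => Num.max (x - t) 0)).
have above_r : \sum_i Num.max (r i - y) 0 = eps.
  by rewrite (sum_r _ (fun t => Num.max (t - y) 0)).
have infE : inf (tr2_set eps rho) = \sum_i clamp x y (r i) ^+ 2.
  rewrite rhoE in rho_dens *; apply: inf_attained.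
    exists (uconj P (diag_mx (\row_i ((clamp x y (r i))%:C)%C))).
      exact: clamp_in_eps_ball UP xy below_r above_r rho_dens eps_gt0.
    by rewrite mxtrace_uconj_cdiagM //=; apply: eq_bigr => i _; rewrite expr2.
  move=> _ [sigma [sigma_dens close] <-].
  by have := clamp_sqr_le_mxtrace UP xy below_r above_r rho_dens sigma_dens close.
have -> : \sum_i (Num.min (Num.max (lam i) x) y) ^+ 2 = \sum_i clamp x y (r i) ^+ 2.
  by rewrite (sum_r _ (fun t => clamp x y t ^+ 2)).
by rewrite /S2eps infE.
Qed.
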